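(* Let $X=[\mathbf x_1,\ldots,\mathbf x_p]\in\mathbb R^{n\times p}$ with $\|\mathbf x_i\|_2\neq0$ for all $i$, $\mathbf y\in\mathbb R^n$, $\lambda\ge0$, and $f(\boldsymbol\beta)=\frac12\|X\boldsymbol\beta-\mathbf y\|_2^2+\lambda\|\boldsymbol\beta\|_1$. Generate sequences as follows. Set $\mathbf s^0=\mathbf 0$ and $\boldsymbol\beta^0=\mathbf 0$. For $k=1,2,\ldots$: first compute $\boldsymbol\beta^k$ by one cyclic pass of coordinate descent started from $\mathbf s^{k-1}$, i.e. for $i=1,\ldots,p$, $$\beta_i^k=\arg\min_{\beta\in\mathbb R} f([\beta_1^k,\ldots,\beta_{i-1}^k,\beta,s_{i+1}^{k-1},\ldots,s_p^{k-1}]^T);$$ then set a history point $\mathbf h^k$, where either $\mathbf h^k=\mathbf s^{k-1}$ for all $k$ (scheme CD+SRRC) or $\mathbf h^k=\boldsymbol\beta^{k-1}$ for all $k$ (scheme CD+SRRT); let $\alpha^k$ be a minimizer over $\alpha\in\mathbb R$ of $f((1-\alpha)\mathbf h^k+\alpha\boldsymbol\beta^k)$, and set $\mathbf s^k=(1-\alpha^k)\mathbf h^k+\alpha^k\boldsymbol\beta^k$. Then for either scheme, for all $k\ge1$, $$f(\mathbf s^{k-1})\ge f(\boldsymbol\beta^k)\ge f(\mathbf s^k)\ge f(\boldsymbol\beta^{k+1}).$$ Moreover, if $f(\mathbf s^{k-1})=f(\boldsymbol\beta^k)$, then $\mathbf s^{k-1}=\boldsymbol\beta^k$ and $f(\boldsymbol\beta^k)=\min_{\boldsymbol\beta}f(\boldsymbol\beta)$.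 Consequently, $\lim_{k\to\infty}f(\boldsymbol\beta^k)=\min_{\boldsymbol\beta}f(\boldsymbol\beta)$.
   Context: The coordinate update has the closed form $\beta_i^k=S(\mathbf x_i^T\mathbf y-\sum_{j<i}\mathbf x_i^T\mathbf x_j\beta_j^k-\sum_{j>i}\mathbf x_i^T\mathbf x_j s_j^{k-1},\lambda)/\|\mathbf x_i\|_2^2$, where $S(x,\lambda)=x-\lambda$ if $x>\lambda$, $x+\lambda$ if $x<-\lambda$, and $0$ if $|x|\le\lambda$. *)

From HB Require Import structures.
From mathcomp Require Import all_boot all_order all_algebra.
From mathcomp Require Import all_classical all_reals all_analysis.
Set Implicit Arguments. Unset Strict Implicit. Unset Printing Implicit Defensive.
Import Order.TTheory GRing.Theory Num.Theory.
Local Open Scope ring_scope.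

Definition sqnorm2 (R : realType) (n : nat) (v : 'cV[R]_n) : R :=
  \sum_(j < n) (v j 0) ^+ 2.

Definition norm1 (R : realType) (p : nat) (b : 'cV[R]_p) : R :=
  \sum_(i < p) `|b i 0|.

Definition lasso (R : realType) (n p : nat) (X : 'M[R]_(n, p)) (y : 'cV[R]_n)
  (lam : R) (b : 'cV[R]_p) : R :=
  2^-1 * sqnorm2 (X *m b - y) + lam * norm1 b.

Definition cd_point (R : realType) (p : nat) (b s : 'cV[R]_p) (i : 'I_p) (t : R)
  : 'cV[R]_p :=
  \col_(j < p) (if (j < i)%N then b j 0 else if j == i then t else s j 0).

(* A coordinate subproblem of [f] is a scalar problem
   [c/2 t^2 - a t + lam |t|] with [c = |x_i|^2 > 0], strongly convex and solved
   by soft thresholding; hence a cyclic pass never increases [f], and leaves it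
   unchanged only at a point where every coordinate is already optimal.  Since
   the l1 term is separable, coordinatewise optimality (a subgradient condition
   in each coordinate) is global optimality.  The line searched at step [k]
   contains [beta^k] ([alpha = 1]), which gives the chain of inequalities.
   For convergence, [f (s^k)] drops by at least [D (s^k)] per step, where
   [D u = f u - f (pass u)] is continuous; so [D (s^k) -> 0], and at a cluster
   point [v] of the iterates [D v = 0]: [v] is a minimiser and [f (s^k)], hence
   [f (beta^k)], tends to [f v].  For [lam = 0] the iterates may be unbounded,
   and one takes cluster points of their projections onto the row space of [X]. *)

From HB Require Import structures.
From mathcomp Require Import all_boot all_order all_algebra.
From mathcomp Require Import all_classical all_reals all_analysis.
From mathcomp Require Import ring lra.
Set Implicit Arguments. Unset Strict Implicit. Unset Printing Implicit Defensive.
Import Order.TTheory GRing.Theory Num.Theory.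
Import numFieldNormedType.Exports.
Local Open Scope classical_set_scope.
Local Open Scope ring_scope.

Section SoftThreshold.
Variables (R : realFieldType) (lam : R).
Hypothesis lam_ge0 : 0 <= lam.

Definition soft (a : R) : R :=
  if lam < a then a - lam else if a < - lam then a + lam else 0.

Lemma softE a : soft a = a + (`|a - lam| - `|a + lam|) / 2.
Proof.
have l0 := lam_ge0; rewrite /soft.
case: (ltrP lam a) => ha; last case: (ltrP a (- lam)) => hb.
- by rewrite ger0_norm; lra.
- by rewrite ltr0_norm; lra.
- by rewrite ger0_norm; lra.
Qed.

Lemma soft_subgradient (c a t : R) : 0 < c ->
  lam * `|soft a / c| + (a - soft a) * (t - soft a / c) <= lam * `|t|.
Proof.
move=> c_gt0; have l0 := lam_ge0.
rewrite /soft; case: (ltrP lam a) => ha; last case: (ltrP a (- lam)) => hb.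
- rewrite ger0_norm; last by apply: divr_ge0; lra.
  have : lam * t <= lam * `|t| by rewrite ler_wpM2l // ler_norm.
  lra.
- rewrite ltr0_norm; last by rewrite pmulr_llt0 ?invr_gt0 //; lra.
  have : lam * - t <= lam * `|t| by rewrite ler_wpM2l // -normrN ler_norm.
  lra.
- rewrite mul0r normr0 mulr0 add0r subr0.
  have : `|a * t| <= lam * `|t| by rewrite normrM ler_wpM2r // ler_norml; lra.
  have := ler_norm (a * t); lra.
Qed.

End SoftThreshold.

Lemma soft0 (R : realFieldType) (a : R) : soft (0 : R) a = a.
Proof. by rewrite softE // subr0 addr0 subrr mul0r addr0. Qed.

Lemma sum_mulmx_tr (R : comPzRingType) m k (A : 'M[R]_(m, k)) (z : 'cV[R]_m)
    (d : 'cV[R]_k) :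
  \sum_r z r 0 * (A *m d) r 0 = \sum_j (A^T *m z) j 0 * d j 0.
Proof.
under eq_bigr do rewrite mxE big_distrr.
rewrite exchange_big; apply: eq_bigr => j _ /=.
by rewrite mxE big_distrl; apply: eq_bigr => r _; rewrite !mxE mulrCA mulrA.
Qed.

Section SquaredNorm.
Variables (R : realType) (n : nat).
Implicit Types z w : 'cV[R]_n.

Lemma sqnorm2_ge0 z : 0 <= sqnorm2 z.
Proof. by apply: sumr_ge0 => j _; exact: sqr_ge0. Qed.

Lemma sqnorm2_gt0 z : z != 0 -> 0 < sqnorm2 z.
Proof.
move=> z_neq0; rewrite lt0r sqnorm2_ge0 andbT; apply: contra z_neq0 => /eqP z0.
apply/eqP/matrixP => j c; rewrite (ord1 c) mxE; apply/eqP.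
by rewrite -sqrf_eq0; apply/eqP/(psumr_eq0P _ z0) => // k _; exact: sqr_ge0.
Qed.

Lemma sqnorm2D z w :
  sqnorm2 (z + w) = sqnorm2 z + 2 * \sum_j z j 0 * w j 0 + sqnorm2 w.
Proof.
rewrite /sqnorm2 mulr_sumr -!big_split /=; apply: eq_bigr => j _.
by rewrite mxE; ring.
Qed.

Lemma sqnorm2Z (a : R) z : sqnorm2 (a *: z) = a ^+ 2 * sqnorm2 z.
Proof.
by rewrite /sqnorm2 mulr_sumr; apply: eq_bigr => j _; rewrite mxE exprMn.
Qed.

Lemma sqr_le_sqnorm2 z r : z r 0 ^+ 2 <= sqnorm2 z.
Proof. by rewrite /sqnorm2 (bigD1 r) //= lerDl sumr_ge0 // => j _; exact: sqr_ge0. Qed.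

End SquaredNorm.

Lemma norm_le_1Dsqr (R : realFieldType) (a : R) : `|a| <= 1 + a ^+ 2.
Proof. by case: (lerP 0 a) => a0; [rewrite ger0_norm | rewrite ltr0_norm]; nra. Qed.

Section DescentCluster.
Variables (R : realType) (T : topologicalType).

Lemma cluster_cvg_continuous (x : nat -> T) (v : T) (g : T -> R) (l : R) :
  cluster (x @ \oo) v -> {for v, continuous g} ->
  g (x k) @[k --> \oo] --> l -> g v = l.
Proof.
move=> clv gv gl.
suff /(cvg_cluster gl)/Rhausdorff -> : cluster (g (x k) @[k --> \oo]) (g v) by [].
by move=> A B gxA /gv gB; have [z [Az Bz]] := clv (g @^-1` A) _ gxA gB; exists (g z).
Qed.

Lemma descent_cluster (K : set T) (x : nat -> T) (phi D : T -> R) :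
  compact K -> (forall k, K (x k)) -> continuous phi -> continuous D ->
  (forall k, 0 <= D (x k)) -> (forall k, phi (x k.+1) <= phi (x k) - D (x k)) ->
  (forall k, 0 <= phi (x k)) ->
  exists2 v, D v = 0 & phi (x k) @[k --> \oo] --> phi v.
Proof.
move=> K_compact Kx phi_cont D_cont D_ge0 descent phi_ge0.
have phix_noninc : nonincreasing_seq (phi \o x).
  by apply/nonincreasing_seqP => k /=; have := D_ge0 k; have := descent k; lra.
have /cvg_ex [L phixL] : cvgn (phi \o x).
  by apply: nonincreasing_is_cvgn => //; exists 0 => _ [k _ <-]; exact: phi_ge0.
have Dx0 : D (x k) @[k --> \oo] --> 0.
  apply: (@squeeze_cvgr _ _ _ _ (cst 0) (fun k => phi (x k) - phi (x k.+1))).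
  - by near=> k; rewrite D_ge0 /=; have := descent k; lra.
  - exact: cvg_cst.
  - by rewrite -(subrr L); apply: cvgB => //; move: phixL; rewrite -cvg_shiftS.
have [v [_ clv]] := K_compact (x @ \oo) _ (filterE _ Kx).
exists v; first exact: cluster_cvg_continuous clv (D_cont v) Dx0.
by rewrite (cluster_cvg_continuous clv (phi_cont v) phixL).
Unshelve. all: by end_near.
Qed.

End DescentCluster.

Section LassoCoordinate.
Variables (R : realType) (n p : nat) (X : 'M[R]_(n, p)) (y : 'cV[R]_n) (lam : R).
Hypothesis lam_ge0 : 0 <= lam.
Hypothesis cols_neq0 : forall i : 'I_p, col i X != 0.
Local Notation f := (lasso X y lam).
Implicit Types (u b s : 'cV[R]_p) (i : 'I_p) (t : R).

Definition resid u : 'cV[R]_n := X *m u - y.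
Definition pgrad i u : R := (X^T *m resid u) i 0.
Definition col_sqnorm i : R := sqnorm2 (col i X).
Definition upd u i t : 'cV[R]_p := \col_j (if j == i then t else u j 0).

Lemma updE u i t : upd u i t = u + (t - u i 0) *: delta_mx i 0.
Proof.
apply/matrixP => j c; rewrite (ord1 c) !mxE eqxx andbT eq_sym.
by case: eqP => [->|_]; rewrite ?mulr1 ?mulr0 ?addr0 // addrC subrK.
Qed.

Lemma upd_id u i : upd u i (u i 0) = u.
Proof. by rewrite updE subrr scale0r addr0. Qed.

Lemma pgradE i u : pgrad i u = \sum_r resid u r 0 * col i X r 0.
Proof. by rewrite /pgrad mxE; apply: eq_bigr => r _; rewrite !mxE mulrC. Qed.

Lemma norm1_upd u i t : norm1 (upd u i t) = norm1 u + (`|t| - `|u i 0|).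
Proof.
rewrite /norm1 (bigD1 i) //= [in RHS](bigD1 i) //= mxE eqxx.
rewrite (eq_bigr (fun j => `|u j 0|)) => [|j /negbTE ji]; last by rewrite mxE ji.
by ring.
Qed.

Lemma lasso_upd u i t : f (upd u i t) =
  f u + (t - u i 0) * pgrad i u + col_sqnorm i / 2 * (t - u i 0) ^+ 2
      + lam * (`|t| - `|u i 0|).
Proof.
rewrite /lasso.
have -> : X *m upd u i t - y = resid u + (t - u i 0) *: col i X.
  by rewrite updE mulmxDr -scalemxAr -colE addrAC.
rewrite norm1_upd sqnorm2D sqnorm2Z pgradE /col_sqnorm.
have -> : \sum_r resid u r 0 * ((t - u i 0) *: col i X) r 0
          = (t - u i 0) * \sum_r resid u r 0 * col i X r 0.
  by rewrite mulr_sumr; apply: eq_bigr => r _; rewrite !mxE; ring.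
by rewrite /resid; field.
Qed.

Lemma col_sqnorm_gt0 i : 0 < col_sqnorm i.
Proof. exact/sqnorm2_gt0/cols_neq0. Qed.

(* The closed form of the coordinate update: [col_sqnorm i * u i 0 - pgrad i u]
   is [x_i^T y - \sum_(j != i) x_i^T x_j u_j]. *)
Definition coord_min i u : R :=
  soft lam (col_sqnorm i * u i 0 - pgrad i u) / col_sqnorm i.

Lemma lasso_upd_coord_min_gap u i t :
  f (upd u i (coord_min i u)) + col_sqnorm i / 2 * (t - coord_min i u) ^+ 2
  <= f (upd u i t).
Proof.
have := soft_subgradient lam_ge0 (col_sqnorm i * u i 0 - pgrad i u) t (col_sqnorm_gt0 i).
rewrite !lasso_upd /coord_min; have := col_sqnorm_gt0 i.
move: (soft lam _) => s; move: (col_sqnorm i) (pgrad i u) (u i 0) => c g v c_gt0.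
suff key : c / 2 * (t - v) ^+ 2 + (t - v) * g
    - (c / 2 * (s / c - v) ^+ 2 + (s / c - v) * g) - c / 2 * (t - s / c) ^+ 2
  = (s - (c * v - g)) * (t - s / c) by lra.
by field; rewrite gt_eqF.
Qed.

Lemma lasso_upd_coord_min u i t : f (upd u i (coord_min i u)) <= f (upd u i t).
Proof.
apply: le_trans (lasso_upd_coord_min_gap u i t); rewrite lerDl.
by rewrite mulr_ge0 ?sqr_ge0 ?divr_ge0 ?ltW ?col_sqnorm_gt0.
Qed.

Lemma coord_min_unique u i t0 :
  (forall t, f (upd u i t0) <= f (upd u i t)) -> t0 = coord_min i u.
Proof.
move=> t0_min; have := lasso_upd_coord_min_gap u i t0; have := t0_min (coord_min i u).
have c2_gt0 : 0 < col_sqnorm i / 2 by rewrite divr_gt0 ?col_sqnorm_gt0.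
move: (col_sqnorm i / 2) c2_gt0 => c c_gt0 h1 h2.
have : c * (t0 - coord_min i u) ^+ 2 <= 0 by lra.
rewrite pmulr_rle0 // => sq_le0; apply/eqP; rewrite -subr_eq0 -sqrf_eq0.
by rewrite eq_le sq_le0 sqr_ge0.
Qed.

Lemma lasso_upd_coord_min_eq u i :
  f (upd u i (coord_min i u)) = f u -> coord_min i u = u i 0.
Proof.
move=> eq_f; apply/esym/coord_min_unique => t.
by rewrite upd_id -eq_f lasso_upd_coord_min.
Qed.

Lemma coord_min_fixed_subgradient u j t : coord_min j u = u j 0 ->
  lam * `|u j 0| - pgrad j u * (t - u j 0) <= lam * `|t|.
Proof.
move=> fixed; have c_neq0 : col_sqnorm j != 0 by rewrite gt_eqF ?col_sqnorm_gt0.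
have soft_fixed : soft lam (col_sqnorm j * u j 0 - pgrad j u) = col_sqnorm j * u j 0.
  by rewrite -[in RHS]fixed /coord_min [RHS]mulrC divfK.
have := soft_subgradient lam_ge0 (col_sqnorm j * u j 0 - pgrad j u) t (col_sqnorm_gt0 j).
rewrite soft_fixed (mulrC (col_sqnorm j)) mulfK //; lra.
Qed.

Lemma lasso_min_of_coord_min_fixed u :
  (forall i, coord_min i u = u i 0) -> forall b, f u <= f b.
Proof.
move=> fixed b; have lin := sum_mulmx_tr X (resid u) (b - u).
rewrite /lasso; have -> : X *m b - y = resid u + X *m (b - u).
  by rewrite /resid mulmxBr [RHS]addrC addrA subrK.
rewrite sqnorm2D lin -/(resid u).
have sub : forall j, lam * `|u j 0| - pgrad j u * (b - u) j 0 <= lam * `|b j 0|.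
  by move=> j; rewrite !mxE; exact: coord_min_fixed_subgradient.
have : lam * norm1 u - \sum_j pgrad j u * (b - u) j 0 <= lam * norm1 b.
  by rewrite /norm1 !mulr_sumr -sumrB; apply: ler_sum => j _; exact: sub.
have := sqnorm2_ge0 (X *m (b - u)).
rewrite -/(resid u); lra.
Qed.

(* Indexed by [nat] so that [cd_sweep m] (the first [m] updates of a cyclic
   pass) recurses on [m]; a no-op when [p <= m]. *)
Definition cd_step (m : nat) u : 'cV[R]_p :=
  \col_j (if j == m :> nat then coord_min j u else u j 0).

Fixpoint cd_sweep (m : nat) u : 'cV[R]_p :=
  if m is m'.+1 then cd_step m' (cd_sweep m' u) else u.

Definition cd_pass u : 'cV[R]_p := cd_sweep p u.

Lemma cd_stepE i u : cd_step i u = upd u i (coord_min i u).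
Proof.
by apply/matrixP => j c; rewrite !mxE -[_ == _ :> nat]/(j == i); case: eqP => [->|].
Qed.

Lemma cd_step_id m u : (p <= m)%N -> cd_step m u = u.
Proof.
move=> le_pm; apply/matrixP => j c; rewrite (ord1 c) mxE.
by rewrite (ltn_eqF (leq_trans (ltn_ord j) le_pm)).
Qed.

Lemma lasso_cd_step m u :
  f (cd_step m u) <= f u /\ (f (cd_step m u) = f u -> cd_step m u = u).
Proof.
have [lt_mp|le_pm] := ltnP m p; last by rewrite cd_step_id.
rewrite -[m]/(nat_of_ord (Ordinal lt_mp)) cd_stepE; set i := Ordinal lt_mp.
split; first by have := lasso_upd_coord_min u i (u i 0); rewrite upd_id.
by move/lasso_upd_coord_min_eq => ->; rewrite upd_id.
Qed.

Lemma lasso_cd_sweep_le m k u :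
  (m <= k)%N -> f (cd_sweep k u) <= f (cd_sweep m u).
Proof.
move/subnKC <-; elim: (k - m)%N => [|d IH]; first by rewrite addn0.
by rewrite addnS /=; apply: le_trans IH; exact: (proj1 (lasso_cd_step _ _)).
Qed.

Lemma cd_sweep_fixed u :
  f (cd_pass u) = f u -> forall m, (m <= p)%N -> cd_sweep m u = u.
Proof.
move=> eq_f; elim=> [//|m IH] lt_mp; have le_mp := ltnW lt_mp.
rewrite /= IH //; case: (lasso_cd_step m u) => le_f; apply.
have := lasso_cd_sweep_le u lt_mp; rewrite /= IH // -/(cd_pass u) eq_f.
by move=> ge_f; apply/le_anti; rewrite le_f ge_f.
Qed.

Lemma cd_pass_fixed u : f (cd_pass u) = f u -> forall i, coord_min i u = u i 0.
Proof.
move=> eq_f i; have := cd_sweep_fixed eq_f (ltn_ord i).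
rewrite -[cd_sweep i.+1 u]/(cd_step i (cd_sweep i u)).
rewrite (cd_sweep_fixed eq_f (ltnW (ltn_ord i))).
by rewrite cd_stepE => /matrixP/(_ i 0); rewrite mxE eqxx.
Qed.

Lemma lasso_cd_pass_le u : f (cd_pass u) <= f u.
Proof. exact: (lasso_cd_sweep_le u (leq0n p)). Qed.

Lemma cd_pass_eq_fixed u : f (cd_pass u) = f u -> cd_pass u = u.
Proof. by move=> eq_f; exact: cd_sweep_fixed. Qed.

Lemma lasso_min_of_cd_pass_eq u : f (cd_pass u) = f u -> forall b, f u <= f b.
Proof. by move/cd_pass_fixed; exact: lasso_min_of_coord_min_fixed. Qed.

Definition cd_mix b s (m : nat) : 'cV[R]_p :=
  \col_j (if (j < m)%N then b j 0 else s j 0).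

Lemma cd_pointE b s i t : cd_point b s i t = upd (cd_mix b s i) i t.
Proof.
by apply/matrixP => j c; rewrite !mxE; case: eqVneq => [->|//]; rewrite ltnn.
Qed.

Lemma cd_pass_eq b s :
  (forall i t, f (cd_point b s i (b i 0)) <= f (cd_point b s i t)) -> cd_pass s = b.
Proof.
move=> b_min; suff sweepE m : (m <= p)%N -> cd_sweep m s = cd_mix b s m.
  by rewrite /cd_pass sweepE //; apply/matrixP => j c; rewrite (ord1 c) mxE ltn_ord.
elim: m => [_|m IH lt_mp]; first by apply/matrixP => j c; rewrite (ord1 c) mxE.
rewrite -[cd_sweep m.+1 s]/(cd_step m (cd_sweep m s)) (IH (ltnW lt_mp)).
rewrite -[m]/(nat_of_ord (Ordinal lt_mp)) cd_stepE.
set i := Ordinal lt_mp; rewrite -(coord_min_unique (t0 := b i 0)).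
  apply/matrixP => j c; rewrite (ord1 c) !mxE ltnS [(j <= i)%N]leq_eqVlt.
  by rewrite -[(j == i :> nat)]/(j == i); case: eqVneq => [->|].
by move=> t; rewrite -!cd_pointE.
Qed.

End LassoCoordinate.

Section NullSpaceShift.
Variables (R : realType) (n p : nat) (X : 'M[R]_(n, p)) (y : 'cV[R]_n).
Hypothesis cols_neq0 : forall i : 'I_p, col i X != 0.
Local Notation f := (lasso X y 0).
Implicit Types (u d : 'cV[R]_p).

Lemma resid_shift u d : X *m d = 0 -> resid X y (u + d) = resid X y u.
Proof. by move=> Xd0; rewrite /resid mulmxDr Xd0 addr0. Qed.

Lemma lasso_shift u d : X *m d = 0 -> f (u + d) = f u.
Proof. by move=> Xd0; rewrite /lasso -!/(resid X y _) resid_shift // !mul0r. Qed.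

Lemma coord_min_shift i u d :
  X *m d = 0 -> coord_min X y 0 i (u + d) = coord_min X y 0 i u + d i 0.
Proof.
move=> Xd0; rewrite /coord_min /pgrad resid_shift // !soft0 mxE.
by field; rewrite gt_eqF // col_sqnorm_gt0.
Qed.

Lemma cd_sweep_shift m u d :
  X *m d = 0 -> cd_sweep X y 0 m (u + d) = cd_sweep X y 0 m u + d.
Proof.
move=> Xd0; elim: m => [//|m IH] /=; rewrite IH.
by apply/matrixP => j c; rewrite (ord1 c) !mxE; case: eqP; rewrite ?coord_min_shift.
Qed.

End NullSpaceShift.

Section BoundedRepresentative.
Variables (R : realType) (n p : nat) (X : 'M[R]_(n, p)) (y : 'cV[R]_n) (lam : R).
Hypothesis lam_ge0 : 0 <= lam.
Hypothesis cols_neq0 : forall i : 'I_p, col i X != 0.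
Local Notation f := (lasso X y lam).

Lemma mulmx_rowspace_proj (u : 'cV[R]_p) :
  X *m ((pinvmx X^T)^T *m (X *m u)) = X *m u.
Proof.
apply: trmx_inj; rewrite trmx_mul (trmx_mul (pinvmx X^T)^T) trmxK mulmxKpV //.
by rewrite trmx_mul submxMl.
Qed.

(* For [lam > 0] the sublevel sets of [f] are bounded.  For [lam = 0] they are
   not, but projecting onto the row space of [X] changes neither [f] nor the
   value of [f] after a pass (which commutes with shifts along [ker X]). *)
Lemma lasso_bounded_repr (c : R) :
  exists (pi : 'cV[R]_p -> 'cV[R]_p) (B : 'I_p -> R), forall u, f u <= c ->
    [/\ f (pi u) = f u, f (cd_pass X y lam (pi u)) = f (cd_pass X y lam u)
      & forall j, `|pi u j 0| <= B j].
Proof.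
have [lam_gt0|lam_le0] := ltrP 0 lam.
  exists id, (fun=> c / lam) => u fu_le; split=> // j.
  rewrite ler_pdivlMr // mulrC; apply: le_trans fu_le.
  have j_le : `|u j 0| <= norm1 u.
    by rewrite /norm1 (bigD1 j) //= lerDl sumr_ge0.
  have := sqnorm2_ge0 (X *m u - y); rewrite /lasso.
  have : lam * `|u j 0| <= lam * norm1 u by rewrite ler_wpM2l.
  lra.
have lam0 : lam = 0 by apply/le_anti; rewrite lam_le0 lam_ge0.
pose P := (pinvmx X^T)^T.
exists (fun u => P *m (X *m u)),
  (fun j => \sum_r `|P j r| * (1 + 2 * c + `|y r 0|)).
move=> u fu_le; split.
- rewrite -(subrK u (P *m _)) addrC lam0 lasso_shift //.
  by rewrite mulmxBr mulmx_rowspace_proj subrr.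
- rewrite -(subrK u (P *m _)) addrC lam0 /cd_pass cd_sweep_shift ?lasso_shift //;
    by rewrite mulmxBr mulmx_rowspace_proj subrr.
move=> j; rewrite mxE; apply: le_trans (ler_norm_sum _ _ _) _; apply: ler_sum => r _.
rewrite normrM ler_wpM2l //.
have -> : (X *m u) r 0 = resid X y u r 0 + y r 0 by rewrite !mxE subrK.
apply: le_trans (ler_normD _ _) _; rewrite lerD2r.
apply: le_trans (norm_le_1Dsqr _) _; rewrite lerD2l.
apply: le_trans (sqr_le_sqnorm2 _ r) _.
by move: fu_le; rewrite /lasso lam0 mul0r addr0 -/(resid X y u); lra.
Qed.

End BoundedRepresentative.

Section LassoContinuity.
Variables (R : realType) (n p : nat) (X : 'M[R]_(n, p)) (y : 'cV[R]_n) (lam : R).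
Hypothesis lam_ge0 : 0 <= lam.
Variable T : topologicalType.
Implicit Types U : T -> 'cV[R]_p.

Let coords_continuous U := forall j, continuous (fun x => U x j 0).

Lemma continuous_resid U r :
  coords_continuous U -> continuous (fun x => resid X y (U x) r 0).
Proof.
move=> U_cont.
have -> : (fun x => resid X y (U x) r 0)
          = fun x => \sum_j X r j * U x j 0 - y r 0.
  by apply/funext => x; rewrite !mxE.
move=> x; apply: cvgB; last exact: cvg_cst.
apply: (cvg_big (@add_continuous R)) => // j _.
by apply: cvgM; [exact: cvg_cst | exact: U_cont].
Qed.

Lemma continuous_pgrad U i :
  coords_continuous U -> continuous (fun x => pgrad X y i (U x)).
Proof.
move=> U_cont; rewrite (funext (fun x => pgradE X y i (U x))) => x.
apply: (cvg_big (@add_continuous R)) => // r _.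
by apply: cvgM; [exact: continuous_resid | exact: cvg_cst].
Qed.

Lemma continuous_lasso U :
  coords_continuous U -> continuous (fun x => lasso X y lam (U x)).
Proof.
move=> U_cont x; apply: cvgD; apply: cvgM; try exact: cvg_cst;
  apply: (cvg_big (@add_continuous R)) => // j _.
- apply: (@continuous_comp _ _ _ (fun x => resid X y (U x) j 0) (fun z => z ^+ 2)).
    exact: continuous_resid.
  exact: exprn_continuous.
- apply: (@continuous_comp _ _ _ (fun x => U x j 0) Num.norm); first exact: U_cont.
  exact: (@norm_continuous _ R^o).
Qed.

Lemma continuous_soft : continuous (soft lam).
Proof.
rewrite (funext (softE lam_ge0)) => a.
apply: cvgD; first exact: cvg_id.
apply: cvgM; last exact: cvg_cst.
by apply: cvgB; apply: cvg_norm; apply: cvgD; exact: cvg_id || exact: cvg_cst.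
Qed.

Lemma continuous_coord_min U i :
  coords_continuous U -> continuous (fun x => coord_min X y lam i (U x)).
Proof.
move=> U_cont x; apply: cvgM; last exact: cvg_cst.
apply: (@continuous_comp _ _ _
  (fun x => col_sqnorm X i * U x i 0 - pgrad X y i (U x))).
  apply: cvgB; last exact: continuous_pgrad.
  by apply: cvgM; [exact: cvg_cst | exact: U_cont].
exact: continuous_soft.
Qed.

Lemma continuous_cd_sweep U m :
  coords_continuous U -> coords_continuous (fun x => cd_sweep X y lam m (U x)).
Proof.
move=> U_cont; elim: m => [//|m IH] j /=.
under [fun x => _]funext do rewrite mxE.
by case: eqP => _; [exact: continuous_coord_min | exact: IH].
Qed.

Lemma continuous_lasso_cd_pass_decrease U : coords_continuous U ->
  continuous (fun x => lasso X y lam (U x) - lasso X y lam (cd_pass X y lam (U x))).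
Proof.
move=> U_cont x; apply: cvgB; first exact: continuous_lasso.
by apply: continuous_lasso => j; exact: continuous_cd_sweep.
Qed.

End LassoContinuity.

Section Acceleration.
Variables (R : realType) (n p : nat) (X : 'M[R]_(n, p)) (y : 'cV[R]_n) (lam : R).
Hypothesis lam_ge0 : 0 <= lam.
Hypothesis cols_neq0 : forall i : 'I_p, col i X != 0.
Local Notation f := (lasso X y lam).
Local Notation cd_pass := (cd_pass X y lam).
Variables (scheme : bool) (beta s : nat -> 'cV[R]_p) (alpha : nat -> R).
Hypothesis beta_cd : forall (k : nat) (i : 'I_p), (0 < k)%N -> forall t : R,
  f (cd_point (beta k) (s k.-1) i (beta k i 0)) <= f (cd_point (beta k) (s k.-1) i t).
Hypothesis s_line_min : forall k : nat, (0 < k)%N ->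
  let h := if scheme then s k.-1 else beta k.-1 in
  (forall a : R,
     f ((1 - alpha k) *: h + alpha k *: beta k) <= f ((1 - a) *: h + a *: beta k))
  /\ s k = (1 - alpha k) *: h + alpha k *: beta k.

Lemma betaE k : (0 < k)%N -> beta k = cd_pass (s k.-1).
Proof. by move=> k_gt0; apply/esym/cd_pass_eq => // i t; exact: beta_cd. Qed.

Lemma lasso_beta_le k : (0 < k)%N -> f (beta k) <= f (s k.-1).
Proof. by move=> k_gt0; rewrite betaE //; exact: lasso_cd_pass_le. Qed.

Lemma lasso_s_le k : (0 < k)%N -> f (s k) <= f (beta k).
Proof.
move=> k_gt0; have /= [s_min ->] := s_line_min k_gt0.
by have := s_min 1; rewrite subrr scale0r add0r scale1r.
Qed.

Lemma lasso_s_le_s0 k : f (s k) <= f (s 0).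
Proof.
elim: k => // k IH; apply: le_trans IH.
exact: le_trans (lasso_s_le _) (lasso_beta_le _).
Qed.

Lemma lasso_beta_eq k : (0 < k)%N -> f (s k.-1) = f (beta k) ->
  s k.-1 = beta k /\ (forall b, f (beta k) <= f b).
Proof.
move=> k_gt0; rewrite betaE // => eq_f.
split; first by rewrite cd_pass_eq_fixed.
by rewrite -eq_f; exact: lasso_min_of_cd_pass_eq.
Qed.

Lemma lasso_s_cluster : exists v : 'cV[R]_p,
  f (cd_pass v) = f v /\ f (s k) @[k --> \oo] --> f v.
Proof.
have [pi [B piP]] := lasso_bounded_repr y lam_ge0 cols_neq0 (f (s 0)).
have f_pi k : f (pi (s k)) = f (s k) by case: (piP _ (lasso_s_le_s0 k)).
have f_cd_pi k : f (cd_pass (pi (s k))) = f (beta k.+1).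
  by rewrite betaE //; case: (piP _ (lasso_s_le_s0 k)).
(* Compactness of boxes is available for row vectors, hence the transposes. *)
pose x k := (pi (s k))^T.
have trmx_coords j : continuous (fun v : 'rV[R]_p => v^T j 0).
  have -> : (fun v : 'rV[R]_p => v^T j 0) = fun v => v 0 j.
    by apply/funext => v; rewrite mxE.
  exact: coord_continuous.
have [v D0 fx_cvg] : exists2 v : 'rV[R]_p,
    f v^T - f (cd_pass v^T) = 0 & f (x k)^T @[k --> \oo] --> f v^T.
  apply: (@descent_cluster _ _
    [set v : 'rV[R]_p | forall j, `[- B j, B j]%classic (v ord0 j)]
    x (fun v => f v^T) (fun v => f v^T - f (cd_pass v^T))).
  - apply: (rV_compact (A := fun j => `[- B j, B j]%classic)) => j.
    exact: segment_compact.
  - move=> k j /=; rewrite /x mxE in_itv /= -ler_norml.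
    by case: (piP _ (lasso_s_le_s0 k)).
  - exact: continuous_lasso.
  - exact: continuous_lasso_cd_pass_decrease.
  - by move=> k /=; rewrite /x trmxK f_pi f_cd_pi subr_ge0 (lasso_beta_le (ltn0Sn k)).
  - move=> k /=; rewrite /x !trmxK f_pi f_cd_pi f_pi.
    by rewrite opprB addrCA subrr addr0 lasso_s_le.
  - by move=> k; rewrite /lasso addr_ge0 ?mulr_ge0 ?sqnorm2_ge0 // /norm1 sumr_ge0.
exists v^T; split; first by lra.
suff <- : (fun k => f (x k)^T) = fun k => f (s k) by [].
by apply/funext => k; rewrite /x trmxK f_pi.
Qed.

Lemma lasso_beta_cvg_min : exists bstar : 'cV[R]_p,
  (forall b, f bstar <= f b) /\ (fun k => f (beta k)) @ \oo --> f bstar.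
Proof.
have [v [v_fixed fs_cvg]] := lasso_s_cluster.
exists v; split; first exact: lasso_min_of_cd_pass_eq.
rewrite -cvg_shiftS.
apply: (squeeze_cvgr (f := fun k => f (s k.+1)) (h := fun k => f (s k))) => //.
  by near=> k; rewrite lasso_s_le // (lasso_beta_le (ltn0Sn k)).
by move: fs_cvg; rewrite -cvg_shiftS.
Unshelve. all: by end_near.
Qed.

End Acceleration.

(* scheme = true : CD+SRRC (h^k = s^{k-1});  scheme = false : CD+SRRT (h^k = beta^{k-1}) *)
Theorem theorem3 (R : realType) (n p : nat) (X : 'M[R]_(n, p)) (y : 'cV[R]_n)
  (lam : R) (scheme : bool)
  (beta s : nat -> 'cV[R]_p) (alpha : nat -> R) :
  (forall i : 'I_p, col i X != 0) ->
  0 <= lam ->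
  s 0%N = 0 -> beta 0%N = 0 ->
  (forall (k : nat) (i : 'I_p), (0 < k)%N -> forall t : R,
      lasso X y lam (cd_point (beta k) (s k.-1) i (beta k i 0))
      <= lasso X y lam (cd_point (beta k) (s k.-1) i t)) ->
  (forall k : nat, (0 < k)%N ->
     let h := if scheme then s k.-1 else beta k.-1 in
     (forall a : R,
        lasso X y lam ((1 - alpha k) *: h + alpha k *: beta k)
        <= lasso X y lam ((1 - a) *: h + a *: beta k))
     /\ s k = (1 - alpha k) *: h + alpha k *: beta k) ->
  (forall k : nat, (0 < k)%N ->
     lasso X y lam (beta k) <= lasso X y lam (s k.-1)
     /\ lasso X y lam (s k) <= lasso X y lam (beta k)
     /\ lasso X y lam (beta k.+1) <= lasso X y lam (s k))
  /\ (forall k : nat, (0 < k)%N ->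
        lasso X y lam (s k.-1) = lasso X y lam (beta k) ->
        s k.-1 = beta k /\ (forall b, lasso X y lam (beta k) <= lasso X y lam b))
  /\ (exists bstar : 'cV[R]_p,
        (forall b, lasso X y lam bstar <= lasso X y lam b)
        /\ (fun k => lasso X y lam (beta k)) @ \oo --> lasso X y lam bstar).
Proof.
move=> cols_neq0 lam_ge0 _ _ beta_cd s_line_min.
have beta_le := lasso_beta_le lam_ge0 cols_neq0 beta_cd.
have s_le := lasso_s_le s_line_min.
split; [move=> k k_gt0 | split].
- by rewrite beta_le // s_le // (beta_le k.+1).
- exact: (lasso_beta_eq lam_ge0 cols_neq0 beta_cd).
- exact: (lasso_beta_cvg_min lam_ge0 cols_neq0 beta_cd s_line_min).
Qed.
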